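(* For positive integers $n,m$, $H(n,m)=0$ if $m>n$, $H(n,m)=1$ if $m=n$, and $H(n,m)=1$ if $m=1$. In all other cases $n>m>1$, \[H(n,m)=\sum_{j=1}^{n-m}H(n-m,j)\binom{m-1}{j-1}.\]
   Context: A composition of a positive integer $n$ is an ordered tuple $(c_1,\ldots,c_m)$ of positive integers with $c_1+\cdots+c_m=n$; it has $m$ parts. It is headstrong if $c_1\ge c_i$ for all $i$. $H(n,m)$ denotes the number of headstrong compositions of $n$ with exactly $m$ parts. *)

From mathcomp Require Import all_boot.
Set Implicit Arguments. Unset Strict Implicit. Unset Printing Implicit Defensive.

(* A composition of n with m parts is encoded as a finite function
   c : 'I_m -> 'I_n.+1 (each part is at most n, which is automatic for a
   composition of n) with all parts positive and sum n. *)
Definition is_composition (n m : nat) (c : {ffun 'I_m -> 'I_n.+1}) : bool :=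
  [forall i, 0 < (c i : nat)] && (\sum_(i < m) (c i : nat) == n).

Definition headstrong (n m : nat) (c : {ffun 'I_m -> 'I_n.+1}) : bool :=
  [forall i, forall j, (val i == 0) ==> ((c j : nat) <= c i)].

Definition H (n m : nat) : nat :=
  #|[set c : {ffun 'I_m -> 'I_n.+1} | is_composition c && headstrong c]|.

(* Let the first part be b + 1.  The other m - 1 parts lie in [1, b + 1] and
   sum to n - b - 1; lowering each by 1 leaves m - 1 parts in [0, b] summing
   to n - m - b.  If exactly i of them are nonzero, which happens in
   'C(m - 1, i) positions, they form a composition of n - m - b into i parts
   bounded by b, i.e. together with the leading part b a headstrong composition
   of n - m into i + 1 parts.  Summing over b gives the recursion. *)

From mathcomp Require Import all_boot zify.
Set Implicit Arguments. Unset Strict Implicit. Unset Printing Implicit Defensive.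

Lemma sum_nat_widen0 (F : nat -> nat) a b : a <= b -> (forall i, a <= i -> F i = 0) ->
  \sum_(0 <= i < a) F i = \sum_(0 <= i < b) F i.
Proof.
move=> le_ab F0; rewrite (big_nat_widen 0 a b) // big_mkcond /=.
by apply: eq_bigr => i _; case: ltnP => // /F0.
Qed.

Lemma sum_binS (f : nat -> nat) l :
  \sum_(i < l.+2) 'C(l.+1, i) * f i =
  \sum_(i < l.+1) 'C(l, i) * f i + \sum_(i < l.+1) 'C(l, i) * f i.+1.
Proof.
rewrite big_ord_recl [in RHS]big_ord_recl /= !bin0 !mul1n -addnA; congr addn.
under eq_bigr do rewrite /bump /= binS mulnDl.
by rewrite big_split /= big_ord_recr /= bin_small // mul0n addn0.
Qed.

Fixpoint words (m N : nat) : seq (seq nat) :=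
  if m is m'.+1 then [seq x :: t | x <- iota 0 N, t <- words m' N] else [:: [::]].

Lemma mem_words m N t : (t \in words m N) = (size t == m) && all (fun x => x < N) t.
Proof.
elim: m t => [|m IH] [|x t] //=; first by apply/allpairsP => -[[y u] []].
apply/allpairsP/andP => [[[y u] [/= hy hu [-> ->]]]|[ht /andP[hx hs]]].
  by move: hu hy; rewrite IH mem_iota eqSS => /andP[-> ->] /andP[_ ->].
by exists (x, t); rewrite mem_iota IH -eqSS ht hx hs.
Qed.

Lemma words_uniq m N : uniq (words m N).
Proof.
elim: m => [|m IH] //=; apply: allpairs_uniq => //; first exact: iota_uniq.
by move=> [x s] [y t] _ _ [-> ->].
Qed.

Lemma count_wordsS m N (P : pred (seq nat)) :
  count P (words m.+1 N) = \sum_(0 <= x < N) count (fun t => P (x :: t)) (words m N).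
Proof.
rewrite /= count_flatten sumnE !big_map /index_iota subn0.
by apply: eq_bigr => x _; rewrite count_map.
Qed.

Section FfunSeq.

Variables m N : nat.

Definition ffun_seq (c : {ffun 'I_m -> 'I_N}) : seq nat := [seq val (c i) | i <- enum 'I_m].

Lemma size_ffun_seq c : size (ffun_seq c) = m.
Proof. by rewrite size_map size_enum_ord. Qed.

Lemma nth_ffun_seq c (i : 'I_m) : nth 0 (ffun_seq c) i = c i.
Proof. by rewrite (nth_map i) ?nth_ord_enum // size_enum_ord. Qed.

Lemma ffun_seq_inj : injective ffun_seq.
Proof.
move=> c1 c2 eq_c; apply/ffunP => i; apply: val_inj.
by rewrite /= -!nth_ffun_seq eq_c.
Qed.

Lemma perm_ffun_seq_words : perm_eq (map ffun_seq (enum {ffun 'I_m -> 'I_N})) (words m N).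
Proof.
apply: uniq_perm; first by rewrite (map_inj_uniq ffun_seq_inj) enum_uniq.
  exact: words_uniq.
move=> t; rewrite mem_words; apply/mapP/andP => [[c _ ->]|[/eqP size_t bnd_t]].
  rewrite size_ffun_seq; split=> //; apply/allP => _ /mapP[i _ ->]; exact: ltn_ord.
have bnd (i : 'I_m) : nth 0 t i < N.
  by apply: (allP bnd_t); apply: mem_nth; rewrite size_t.
exists [ffun i => Ordinal (bnd i)]; first by rewrite mem_enum.
apply: (@eq_from_nth _ 0); first by rewrite size_ffun_seq size_t.
by move=> k; rewrite size_t => lt_km; rewrite (nth_ffun_seq _ (Ordinal lt_km)) ffunE.
Qed.

Lemma card_ffun_seq (P : pred (seq nat)) :
  #|[set c : {ffun 'I_m -> 'I_N} | P (ffun_seq c)]| = count P (words m N).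
Proof.
rewrite -(permP perm_ffun_seq_words) count_map cardE /enum_mem size_filter.
rewrite (@eq_filter _ _ predT) // filter_predT.
by apply: eq_count => c; rewrite /= inE.
Qed.

End FfunSeq.

Definition composition_seq (n : nat) (t : seq nat) : bool :=
  all (fun x => 0 < x) t && (sumn t == n).

Definition headstrong_seq (t : seq nat) : bool := all (fun x => x <= head 0 t) t.

Lemma is_composition_ffun_seq n m (c : {ffun 'I_m -> 'I_n.+1}) :
  is_composition c = composition_seq n (ffun_seq c).
Proof.
rewrite /is_composition /composition_seq /ffun_seq sumnE big_map big_enum /=.
congr andb; apply/forallP/allP => [pos_c _ /mapP[i _ ->]|pos_c i] //.
by apply: pos_c; apply/map_f; rewrite mem_enum.
Qed.

Lemma headstrong_ffun_seq n m (c : {ffun 'I_m -> 'I_n.+1}) :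
  headstrong c = headstrong_seq (ffun_seq c).
Proof.
case: m c => [|m] c.
  by rewrite /headstrong_seq (size0nil (size_ffun_seq c)); apply/forallP => -[].
rewrite /headstrong_seq -nth0 (nth_ffun_seq c ord0).
apply/forallP/allP => [hs _ /mapP[j _ ->]|hs i]; first exact: (forallP (hs ord0) j).
apply/forallP => j; apply/implyP => /eqP i0.
by rewrite (_ : i = ord0); [apply/hs/map_f; rewrite mem_enum | apply: val_inj].
Qed.

Lemma H_count n m :
  H n m = count (fun t => composition_seq n t && headstrong_seq t) (words m n.+1).
Proof.
rewrite /H -card_ffun_seq; apply: eq_card => c.
by rewrite !inE is_composition_ffun_seq headstrong_ffun_seq.
Qed.

Fixpoint ncomp (p : pred nat) (l s : nat) : nat :=
  if l is l'.+1 then \sum_(0 <= x < s.+1 | p x) ncomp p l' (s - x) else (s == 0 : nat).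

Lemma eq_ncomp (p q : pred nat) : p =1 q -> ncomp p =2 ncomp q.
Proof.
move=> eq_pq l; elim: l => [|l IH] s //=.
by rewrite (eq_bigl _ _ eq_pq); apply: eq_bigr => x _; rewrite IH.
Qed.

Lemma ncomp0 (p : pred nat) l : p 0 -> ncomp p l 0 = 1.
Proof. by move=> p0; elim: l => //= l IH; rewrite big_mkcond big_nat1 p0 IH. Qed.

Lemma ncomp_pred0 l s : 0 < s -> ncomp pred0 l s = 0.
Proof. by case: l => [|l] /=; [case: s | rewrite big_pred0]. Qed.

Lemma count_words_ncomp (p : pred nat) l s N : (forall x, p x -> x < N) ->
  count (fun t => all p t && (sumn t == s)) (words l N) = ncomp p l s.
Proof.
move=> p_bnd; elim: l s => [|l IH] s /=; first by rewrite addn0 eq_sym.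
rewrite count_wordsS.
transitivity (\sum_(0 <= x < N | p x && (x <= s)) ncomp p l (s - x)).
  rewrite [RHS]big_mkcond /=; apply: eq_bigr => x _.
  have [px|npx] /= := boolP (p x); last by rewrite (@eq_count _ _ pred0) ?count_pred0.
  have [le_xs|lt_sx] := leqP x s.
    by rewrite -IH; apply: eq_count => t; congr andb; apply/eqP/eqP; lia.
  by rewrite (@eq_count _ _ pred0) ?count_pred0 // => t; apply/andP => -[_ /eqP]; lia.
rewrite (big_nat_widen 0 N (N + s.+1)) ?leq_addr //.
rewrite [RHS](big_nat_widen 0 s.+1 (N + s.+1)) ?leq_addl //.
by apply: eq_bigl => x; have := p_bnd x; case: (p x) => //= /(_ isT) ->; rewrite ltnS andbT.
Qed.

Section PositiveParts.

Variable p : pred nat.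
Hypothesis p0 : ~~ p 0.

Lemma ncomp_small l s : s < l -> ncomp p l s = 0.
Proof.
elim: l s => [|l IH] s //= lt_sl.
rewrite big_nat_cond big1 // => -[|x] /andP[/andP[_ lt_xs] px].
  by rewrite (negbTE p0) in px.
by apply: IH; lia.
Qed.

(* Choose which of the l parts are nonzero. *)
Lemma ncomp_add0 l s :
  ncomp (fun x => (x == 0) || p x) l s = \sum_(i < l.+1) 'C(l, i) * ncomp p i s.
Proof.
elim: l s => [|l IH] s; first by rewrite big_ord1 bin0 mul1n.
rewrite (sum_binS (ncomp p ^~ s)) /= big_ltn_cond //= IH subn0; congr addn.
under [RHS]eq_bigr do rewrite big_ltn_cond // (negbTE p0) big_distrr.
rewrite big_add1 /=.
under eq_bigr do rewrite IH.
rewrite exchange_big /=; apply: eq_bigr => i _.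
by rewrite big_add1.
Qed.

End PositiveParts.

Lemma ncomp_shift (p : pred nat) l s :
  ncomp (fun y => (0 < y) && p y.-1) l (s + l) = ncomp p l s.
Proof.
elim: l s => [|l IH] s /=; first by rewrite addn0.
rewrite big_ltn_cond // big_add1 /= addnS (@big_cat_nat _ _ _ s.+1) ?ltnS ?leq_addr //=.
rewrite [X in _ + X]big_nat_cond [X in _ + X]big1 ?addn0 => [|y /andP[/andP[lt_sy lt_y] _]].
  rewrite big_nat_cond [RHS]big_nat_cond; apply: eq_bigr => y /andP[/andP[_ lt_ys] _].
  by rewrite subSS -IH (_ : s + l - y = s - y + l) //; lia.
by rewrite ncomp_small //; lia.
Qed.

Lemma H_by_first_part n k :
  H n k.+1 = \sum_(1 <= x < n.+1) ncomp (fun y => 0 < y <= x) k (n - x).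
Proof.
rewrite H_count count_wordsS big_ltn // (@eq_count _ _ pred0) ?count_pred0 //.
apply: eq_big_nat => x /andP[pos_x lt_xn].
rewrite -(@count_words_ncomp _ k (n - x) n.+1) => [|y /andP[_ le_yx]]; last lia.
apply: eq_count => t; rewrite /composition_seq /headstrong_seq /= pos_x leqnn.
have -> : all (fun y => 0 < y <= x) t = all (leq 1) t && all (leq^~ x) t.
  by rewrite -all_predI.
by case: (all _ t); case: (all _ t); rewrite ?andbF //=; apply/eqP/eqP; lia.
Qed.

Lemma H_eq0 n m : n < m -> H n m = 0.
Proof.
case: m => // k lt_nk; rewrite H_by_first_part big_nat_cond big1 //.
by move=> x /andP[/andP[pos_x lt_xn] _]; rewrite ncomp_small //; lia.
Qed.

Lemma H_n1 n : 0 < n -> H n 1 = 1.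
Proof.
move=> pos_n; rewrite H_by_first_part big_nat_recr //= subnn big_nat_cond big1 //.
by move=> x /andP[/andP[_ lt_xn] _]; rewrite subn_eq0 leqNgt lt_xn.
Qed.

Lemma H_nn n : H n n = 1.
Proof.
case: n => [|k]; first by rewrite H_count.
rewrite H_by_first_part big_ltn // subSS subn0.
rewrite big_nat_cond big1 ?addn0 => [|x /andP[/andP[lt_1x lt_xk] _]]; last first.
  by rewrite ncomp_small //; lia.
rewrite (@eq_ncomp _ (fun y => (0 < y) && (y.-1 <= 0))) => [|[]] //.
by rewrite -{2}[k]add0n (ncomp_shift (leq^~ 0)) ncomp0.
Qed.

Lemma H_recursion d k : 0 < d ->
  H (d + k.+1) k.+1 = \sum_(0 <= i < k.+1) 'C(k, i) * H d i.+1.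
Proof.
move=> pos_d; rewrite H_by_first_part.
transitivity (\sum_(0 <= b < d.+1) ncomp (fun y => y <= b) k (d - b)).
  rewrite big_add1 /= (@big_cat_nat _ _ _ d.+1) //= ?addnS ?ltnS ?leq_addr //.
  rewrite [X in _ + X]big_nat_cond [X in _ + X]big1 ?addn0 => [|b /andP[/andP[lt_db lt_b] _]].
    apply: eq_big_nat => b /andP[_ le_bd].
    rewrite -(ncomp_shift (leq^~ b)) (_ : d - b + k = d + k - b); last lia.
    by apply: eq_ncomp => -[].
  by rewrite ncomp_small //; lia.
have leq_split b : (fun y => y <= b) =1 (fun y => (y == 0) || (0 < y <= b)) by case.
under eq_bigr => b _ do rewrite (eq_ncomp (leq_split b)) ncomp_add0 //.
rewrite exchange_big [RHS]big_mkord /=; apply: eq_bigr => i _.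
rewrite -big_distrr H_by_first_part /=.
by rewrite big_ltn // subn0 (@eq_ncomp _ pred0) ?ncomp_pred0 // => -[].
Qed.

Theorem mainTheorem10 (n m : nat) (hn : 0 < n) (hm : 0 < m) :
  (n < m -> H n m = 0) /\
  (m = n -> H n m = 1) /\
  (m = 1 -> H n m = 1) /\
  (1 < m < n ->
     H n m = \sum_(1 <= j < (n - m).+1) H (n - m) j * 'C(m - 1, j - 1)).
Proof.
split; first exact: H_eq0.
split; first by move->; exact: H_nn.
split; first by move->; exact: H_n1.
case: m hm => // k _ /andP[_ lt_kn]; set d := n - k.+1.
have pos_d : 0 < d by rewrite subn_gt0.
rewrite -(subnK (ltnW lt_kn)) -/d H_recursion // big_add1 subn1 /=.
rewrite (@sum_nat_widen0 _ _ (k.+1 + d) (leq_addr _ _)) => [|i /bin_small->] //.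
rewrite [RHS](@sum_nat_widen0 _ _ (k.+1 + d) (leq_addl _ _)) => [|i le_di]; last first.
  by rewrite H_eq0.
by apply: eq_bigr => i _; rewrite mulnC subn1.
Qed.
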